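(* Consider an affine IFS with attractor $X$ and invariant measure $\mu$, and suppose the fixed point condition holds for some $k\in\mathbb{N}$ and $\tau\in\mathcal{A}_k$. Then there exist $n_0\in\mathbb{N}$ and a constant $C$ independent of $n$ such that $$\mu(\tau^n(X))=C\,p_\tau^n\quad\text{for all }n\ge n_0,$$ where $\tau^n$ denotes the $n$-fold composition of $\tau$.
   Context: Affine IFS: $R$ real $d\times d$ expansive matrix, $\mathcal{B}=\{b_1,\dots,b_N\}\subset\mathbb{R}^d$, weights $p_{b_i}>0$ summing to $1$, $\tau_{b_i}(x)=R^{-1}(x+b_i)$, attractor $X=\bigcup_i\tau_{b_i}(X)$, invariant measure $\mu=\sum_ip_{b_i}\mu\circ\tau_{b_i}^{-1}$. For a word $I=i_1\cdots i_n\in\{1,\dots,N\}^n$ let $\tau_I=\tau_{b_{i_1}}\circ\cdots\circ\tau_{b_{i_n}}$ and $p_I=p_{b_{i_1}}\cdots p_{b_{i_n}}$. $\mathcal{A}_n$ is the set of distinct maps among $\{\tau_I: I\in\{1,\dots,N\}^n\}$ (words giving the same map are identified), and for $\tau\in\mathcal{A}_n$, $p_\tau=\sum\{p_I:\tau_I=\tau\}$; thus $\mu=\sum_{\tau\in\mathcal{A}_n}p_\tau\mu\circ\tau^{-1}$. For $\tau\in\mathcal{A}_n$, $x_\tau$ denotes its fixed point. Fixed point condition (for $k$ and $\tau\in\mathcal{A}_k$): $x_\tau\notin\tilde\tau(X)$ for every $\tilde\tau\in\mathcal{A}_k$ with $\tilde\tau\ne\tau$. *)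

From Stdlib Require Import Fin Reals Lra Lia List Classical ClassicalEpsilon FunctionalExtensionality.
Import ListNotations.
Open Scope R_scope.

Definition Vec (d : nat) := Fin.t d -> R.
Definition Mat (d : nat) := Fin.t d -> Fin.t d -> R.
Definition set (d : nat) := Vec d -> Prop.

Fixpoint fin_sum (d : nat) : (Fin.t d -> R) -> R :=
  match d return (Fin.t d -> R) -> R with
  | O => fun _ => 0
  | S d' => fun f => f Fin.F1 + fin_sum d' (fun i => f (Fin.FS i))
  end.

Fixpoint sum_lt (n : nat) (f : nat -> R) : R :=
  match n with O => 0 | S m => sum_lt m f + f m end.

Definition mv {d} (A : Mat d) (x : Vec d) : Vec d := fun i => fin_sum d (fun j => A i j * x j).
Definition vadd {d} (x y : Vec d) : Vec d := fun i => x i + y i.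
Definition vscal {d} (a : R) (x : Vec d) : Vec d := fun i => a * x i.
Definition vnorm {d} (x : Vec d) : R := sqrt (fin_sum d (fun i => x i * x i)).
Definition vdist {d} (x y : Vec d) : R := vnorm (fun i => x i - y i).

(* expansive: every complex eigenvalue a + i b of the real matrix R
   (with eigenvector u + i w /= 0) satisfies |a + i b| > 1 *)
Definition expansive {d} (Rm : Mat d) : Prop :=
  forall (a b : R) (u w : Vec d),
    (exists i, u i <> 0 \/ w i <> 0) ->
    mv Rm u = (fun i => a * u i - b * w i) ->
    mv Rm w = (fun i => b * u i + a * w i) ->
    1 < a * a + b * b.

Definition is_open {d} (U : set d) : Prop :=
  forall x, U x -> exists eps, 0 < eps /\ forall y, vdist x y < eps -> U y.

Definition is_compact {d} (S : set d) : Prop :=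
  forall (I : Type) (U : I -> set d),
    (forall i, is_open (U i)) ->
    (forall x, S x -> exists i, U i x) ->
    exists l : list I, forall x, S x -> exists i, In i l /\ U i x.

Inductive borel {d} : set d -> Prop :=
  | borel_open : forall U, is_open U -> borel U
  | borel_compl : forall A, borel A -> borel (fun x => ~ A x)
  | borel_union : forall A : nat -> set d, (forall n, borel (A n)) ->
      borel (fun x => exists n, A n x).

Definition is_prob_measure {d} (mu : set d -> R) : Prop :=
  (forall A, borel A -> 0 <= mu A) /\
  mu (fun _ => False) = 0 /\
  mu (fun _ => True) = 1 /\
  (forall A : nat -> set d, (forall n, borel (A n)) ->
     (forall m n x, m <> n -> A m x -> A n x -> False) ->
     infinite_sum (fun n => mu (A n)) (mu (fun x => exists n, A n x))).

Definition image {d} (f : Vec d -> Vec d) (S : set d) : set d :=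
  fun x => exists y, S y /\ x = f y.
Definition preimage {d} (f : Vec d -> Vec d) (S : set d) : set d :=
  fun x => S (f x).

Definition tau {d} (Rinv : Mat d) (b : nat -> Vec d) (i : nat) (x : Vec d) : Vec d :=
  mv Rinv (vadd x (b i)).

Definition is_attractor {d} (Rinv : Mat d) (N : nat) (b : nat -> Vec d) (X : set d) : Prop :=
  (exists x, X x) /\ is_compact X /\
  (forall x, X x <-> exists i, (i < N)%nat /\ image (tau Rinv b i) X x).

Definition is_invariant {d} (Rinv : Mat d) (N : nat) (b : nat -> Vec d) (p : nat -> R)
    (mu : set d -> R) : Prop :=
  forall A, borel A -> mu A = sum_lt N (fun i => p i * mu (preimage (tau Rinv b i) A)).

Fixpoint tau_word {d} (Rinv : Mat d) (b : nat -> Vec d) (I : list nat) : Vec d -> Vec d :=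
  match I with
  | nil => fun x => x
  | i :: J => fun x => tau Rinv b i (tau_word Rinv b J x)
  end.

Fixpoint p_word (p : nat -> R) (I : list nat) : R :=
  match I with nil => 1 | i :: J => p i * p_word p J end.

Fixpoint words (N k : nat) : list (list nat) :=
  match k with
  | O => [nil]
  | S k' => flat_map (fun i => map (cons i) (words N k')) (seq 0 N)
  end.

Definition in_A {d} (Rinv : Mat d) (N : nat) (b : nat -> Vec d) (k : nat)
    (t : Vec d -> Vec d) : Prop :=
  exists I, length I = k /\ Forall (fun i => (i < N)%nat) I /\ tau_word Rinv b I = t.

Definition p_map {d} (Rinv : Mat d) (N : nat) (b : nat -> Vec d) (p : nat -> R) (k : nat)
    (t : Vec d -> Vec d) : R :=
  fold_right Rplus 0
    (map (fun I => if excluded_middle_informative (tau_word Rinv b I = t) then p_word p I else 0)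
         (words N k)).

Definition fixed_point_condition {d} (Rinv : Mat d) (N : nat) (b : nat -> Vec d)
    (X : set d) (k : nat) (t : Vec d -> Vec d) : Prop :=
  forall x, t x = x ->
    forall t', in_A Rinv N b k t' -> t' <> t -> ~ image t' X x.

From Stdlib Require Import Reals Lra Lia List Classical ClassicalEpsilon FunctionalExtensionality PropExtensionality.
From mathcomp Require all_boot all_order all_algebra.
From mathcomp Require Rstruct complex.
Open Scope R_scope.

(* For k = 0, tau is the identity and p_tau = 1.  For k > 0, tau is affine
   with linear part R^{-k}.  Since R is expansive, every complex eigenvalue
   of R^{-1} has modulus < 1, so R^{-m} -> 0 (Cayley-Hamilton after
   factoring the characteristic polynomial over C); in particular tau has a
   fixed point x*, and tau^m(X) shrinks onto x*.  The fixed point condition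
   and compactness put every other tau' in A_k at positive distance from x*
   on X, while iterating the invariance equation shows that mu is carried
   by every neighbourhood of X.  So for large m the preimage of tau^{m+1}(X)
   under tau' != tau is mu-null, and invariance under A_k gives
   mu(tau^{m+1}(X)) = p_tau mu(tau^m(X)). *)

(* A nonnegative sequence with a_{n+1} <= rho a_n + eta_n, where 0 <= rho < 1
   and eta_n -> 0, tends to 0: beyond the point where eta_n < (1-rho) e/2 the
   excess of a_n over e/2 contracts geometrically. *)
Lemma perturbed_contraction_vanishes (a eta : nat -> R) (rho : R) :
  0 <= rho < 1 -> (forall n, 0 <= a n) ->
  (forall n, a (S n) <= rho * a n + eta n) ->
  (forall e, 0 < e -> exists N, forall n, (N <= n)%nat -> eta n < e) ->
  forall e, 0 < e -> exists N, forall n, (N <= n)%nat -> a n < e.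
Proof.
  intros Hr Ha Hrec Heta e He.
  destruct (Heta ((1 - rho) * e / 2)) as [N1 HN1].
  { apply Rmult_lt_0_compat; [|lra]. apply Rmult_lt_0_compat; lra. }
  set (excess := fun n => Rmax (a n - e/2) 0).
  assert (Hexcess : forall m, excess (N1 + m)%nat <= rho ^ m * excess N1).
  { induction m as [|m IH].
    - rewrite Nat.add_0_r. simpl. lra.
    - replace (N1 + S m)%nat with (S (N1 + m)) by lia.
      assert (Hstep : excess (S (N1 + m)) <= rho * excess (N1 + m)%nat).
      { unfold excess. pose proof (Hrec (N1 + m)%nat). pose proof (HN1 (N1 + m)%nat ltac:(lia)).
        assert (0 <= rho * Rmax (a (N1 + m)%nat - e / 2) 0).
        { apply Rmult_le_pos; [lra| apply Rmax_r]. }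
        apply Rmax_lub; [|lra].
        apply Rle_trans with (rho * (a (N1+m)%nat - e/2)); [nra|].
        apply Rmult_le_compat_l; [lra | apply Rmax_l]. }
      simpl. apply Rle_trans with (1 := Hstep). rewrite Rmult_assoc.
      apply Rmult_le_compat_l; lra. }
  assert (Hpos : 0 <= excess N1) by (unfold excess; apply Rmax_r).
  destruct (pow_lt_1_zero rho ltac:(rewrite Rabs_right; lra) ((e/2) / (excess N1 + 1)))
    as [m0 Hm0].
  { apply Rdiv_lt_0_compat; lra. }
  exists (N1 + m0)%nat. intros n Hn.
  replace n with (N1 + (n - N1))%nat by lia.
  pose proof (Hexcess (n - N1)%nat) as H.
  pose proof (Hm0 (n - N1)%nat ltac:(lia)) as H2.
  rewrite Rabs_right in H2 by (apply Rle_ge, pow_le; lra).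
  assert (Hp : 0 <= rho ^ (n - N1)) by (apply pow_le; lra).
  assert (rho ^ (n - N1) * excess N1 < e/2).
  { apply Rle_lt_trans with (rho ^ (n - N1) * (excess N1 + 1)); [nra|].
    apply Rmult_lt_reg_r with (/ (excess N1 + 1)); [apply Rinv_0_lt_compat; lra|].
    rewrite Rmult_assoc, Rinv_r by lra. rewrite Rmult_1_r. exact H2. }
  assert (a (N1 + (n - N1))%nat - e/2 <= excess (N1 + (n - N1))%nat)
    by (unfold excess; apply Rmax_l).
  lra.
Qed.

(* Spectral facts about the inverse M of an expansive real matrix N, acting on
   row vectors: all complex eigenvalues of M have modulus < 1, hence the powers
   of M tend to 0 entrywise and 1 - M^k is invertible for k > 0. *)
Module Spectral.
Import all_boot all_order all_algebra Rstruct complex.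
Import Order.TTheory GRing.Theory Num.Theory.
Local Open Scope ring_scope.
Local Notation RR := Rdefinitions.R.
Local Notation C := (RR[i]).
Local Notation normc := ComplexField.Normc.normc.
Local Notation toC := (real_complex RR).

Definition vanishes (g : nat -> C) : Prop :=
  forall e : RR, 0 < e -> exists N0, forall m, (N0 <= m)%N -> normc (g m) < e.

Lemma normc_ge0 (x : C) : 0 <= normc x.
Proof. by case: x => a b; exact: sqrtr_ge0. Qed.

Lemma normc_real (x : RR) : normc (toC x) = `|x|.
Proof. by rewrite /= expr0n /= addr0 sqrtr_sqr. Qed.

Lemma vanishes_ext (g g' : nat -> C) : (forall m, g m = g' m) -> vanishes g -> vanishes g'.
Proof. by move=> E H e e0; have [N0 HN] := H e e0; exists N0 => m Hm; rewrite -E; exact: HN. Qed.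

Lemma vanishes_recursive (g h : nat -> C) (r : C) : normc r < 1 ->
  (forall m, g m.+1 = r * g m + h m) -> vanishes h -> vanishes g.
Proof.
move=> Hr Hg Hh e e0.
have [||||| N0 HN0] := perturbed_contraction_vanishes (fun m => normc (g m))
  (fun m => normc (h m)) (normc r) _ _ _ _ e _.
- by split; [apply/RleP; exact: normc_ge0 | apply/RltP].
- by move=> m; apply/RleP; exact: normc_ge0.
- move=> m; apply/RleP; rewrite Hg.
  by apply: le_trans (complex.le_normcD _ _) _; rewrite ComplexField.Normc.normcM.
- move=> e' /RltP e'0; have [N1 HN1] := Hh e' e'0.
  by exists N1 => m /ssrnat.leP Hm; apply/RltP; exact: HN1.
- by apply/RltP.
- by exists N0 => m Hm; apply/RltP; apply: HN0; apply/ssrnat.leP.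
Qed.

Section RealImaginary.
Variable n : nat.

Lemma complex_row_split (z : 'rV[C]_n) :
  z = map_mx toC (map_mx (@complex.Re RR) z) + Complex 0 1 *: map_mx toC (map_mx (@complex.Im RR) z).
Proof. by apply/matrixP => i j; rewrite !mxE; case: (z i j) => a b /=; simpc. Qed.

Lemma complex_row_split_inj (X Y X' Y' : 'rV[RR]_n) :
  map_mx toC X + Complex 0 1 *: map_mx toC Y = map_mx toC X' + Complex 0 1 *: map_mx toC Y' ->
  X = X' /\ Y = Y'.
Proof.
move=> H; split; apply/matrixP=> i j.
  by have := congr1 (fun A : 'rV_n => complex.Re (A i j)) H; rewrite !mxE /=; simpc.
by have := congr1 (fun A : 'rV_n => complex.Im (A i j)) H; rewrite !mxE /=; simpc.
Qed.

Lemma complex_row_scale (s : C) (X Y : 'rV[RR]_n) :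
  s *: (map_mx toC X + Complex 0 1 *: map_mx toC Y) =
  map_mx toC (complex.Re s *: X - complex.Im s *: Y)
    + Complex 0 1 *: map_mx toC (complex.Im s *: X + complex.Re s *: Y).
Proof.
apply/matrixP => i j; rewrite !mxE; case: s => a b /=; simpc.
by congr (_ +i* _)%C; rewrite addrC.
Qed.
End RealImaginary.

Section InverseOfExpansive.
Variable n : nat.
Variables M N : 'M[RR]_n.+1.
Hypothesis MN : M *m N = 1%:M.
Hypothesis N_expansive : forall (a b : RR) (u w : 'rV[RR]_n.+1), (u != 0) \/ (w != 0) ->
  u *m N = a *: u - b *: w -> w *m N = b *: u + a *: w -> 1 < a ^+ 2 + b ^+ 2.

Let Mc := map_mx toC M.
Let Nc := map_mx toC N.

(* An eigenvector z of M for r is an eigenvector of N for r^-1; its real and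
   imaginary parts witness that |r^-1| > 1. *)
Lemma eigenvalue_small (r : C) : root (char_poly Mc) r -> normc r < 1.
Proof.
rewrite -eigenvalue_root_char => /eigenvalueP [z Hz z0].
have zMN : z *m Mc *m Nc = z by rewrite -mulmxA -map_mxM MN map_mx1 mulmx1.
have r0 : r != 0.
  by apply: contraNneq z0 => r0; rewrite -zMN Hz r0 scale0r mul0mx.
have zN : z *m Nc = r^-1 *: z.
  by rewrite -{2}zMN Hz -scalemxAl scalerA mulVf // scale1r.
set s := r^-1 in zN.
set u := map_mx (@complex.Re RR) z; set w := map_mx (@complex.Im RR) z.
have Ez := complex_row_split _ z; rewrite -/u -/w in Ez.
have zN' : z *m Nc = map_mx toC (u *m N) + Complex 0 1 *: map_mx toC (w *m N).
  by rewrite {1}Ez mulmxDl -scalemxAl /Nc !map_mxM.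
move: zN; rewrite zN' Ez complex_row_scale => /complex_row_split_inj [Eu Ew].
have uw0 : (u != 0) \/ (w != 0).
  case: (eqVneq u 0) => [u0|]; last by left.
  case: (eqVneq w 0) => [w0|]; last by right.
  by move: z0; rewrite Ez u0 w0 !map_mx0 scaler0 addr0 eqxx.
have Hs : 1 < normc s.
  have H1 := N_expansive _ _ _ _ uw0 Eu Ew.
  have -> : normc s = Num.sqrt (complex.Re s ^+ 2 + complex.Im s ^+ 2) by case: (s).
  by rewrite -sqrtr1 ltr_sqrt // (lt_trans ltr01 H1).
rewrite -[r]invrK ComplexField.Normc.normcV invf_lt1 //.
exact: lt_trans ltr01 Hs.
Qed.

(* If y M^m Q -> 0 with Q = prod_(z in l) (M - z) and all |z| < 1, then
   y M^m -> 0: peel off one factor at a time with [vanishes_recursive]. *)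
Lemma vanishes_through_factors (l : seq C) : (forall r, r \in l -> normc r < 1) ->
  forall (y : 'rV[C]_n.+1) (j : 'I_n.+1),
  vanishes (fun m => (y *m Mc ^+ m *m horner_mx Mc (\prod_(z <- l) ('X - z%:P))) 0 j) ->
  vanishes (fun m => (y *m Mc ^+ m) 0 j).
Proof.
elim: l => [|r l IH] Hl y j Hy.
  by apply: vanishes_ext Hy => m; rewrite big_nil rmorph1 mulmx1.
apply: (IH _ y j) => [z zl|]; first by apply: Hl; rewrite in_cons zl orbT.
set Q := horner_mx Mc (\prod_(z <- l) ('X - z%:P)).
apply: (vanishes_recursive _ _ r _ _ Hy); first by apply: Hl; rewrite mem_head.
move=> m /=.
rewrite big_cons rmorphM /= rmorphB /= horner_mx_X horner_mx_C -/Q.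
rewrite -mulmxE mulmxA mulmxBr mulmxBl mul_mx_scalar -scalemxAl exprSr mulmxA.
by rewrite !mxE addrCA subrr addr0.
Qed.

(* Cayley-Hamilton: the full product over the eigenvalues annihilates Mc. *)
Lemma orbit_vanishes_complex (y : 'rV[C]_n.+1) (j : 'I_n.+1) :
  vanishes (fun m => (y *m Mc ^+ m) 0 j).
Proof.
have [rs Hrs] := closed_field_poly_normal (char_poly Mc).
move: Hrs; rewrite (monicP (char_poly_monic Mc)) scale1r => Hrs.
apply: (vanishes_through_factors rs).
  by move=> r rin; apply: eigenvalue_small; rewrite Hrs root_prod_XsubC.
rewrite -Hrs Cayley_Hamilton => e e0; exists 0%N => m _.
by rewrite mulmx0 mxE ComplexField.Normc.normc0.
Qed.

Lemma orbit_vanishes (v : 'rV[RR]_n.+1) (j : 'I_n.+1) (e : RR) : 0 < e ->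
  exists N0, forall m, (N0 <= m)%N -> `|(v *m M ^+ m) 0 j| < e.
Proof.
move=> e0; have [N0 HN] := orbit_vanishes_complex (map_mx toC v) j e e0.
exists N0 => m Hm; have := HN m Hm.
have -> : Mc ^+ m = map_mx toC (M ^+ m) by rewrite rmorphXn.
by rewrite -map_mxM mxE normc_real.
Qed.

Lemma power_entries_vanish (e : RR) : 0 < e ->
  exists N0, forall m, (N0 <= m)%N -> forall j i, `|(M ^+ m) j i| < e.
Proof.
move=> e0.
have H (ji : 'I_n.+1 * 'I_n.+1) :
    exists N0, forall m, (N0 <= m)%N -> `|(M ^+ m) ji.1 ji.2| < e.
  have [N0 HN] := orbit_vanishes (delta_mx 0 ji.1) ji.2 _ e0.
  by exists N0 => m Hm; have := HN m Hm; rewrite -rowE mxE.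
have [f Hf] := fin_all_exists H.
exists (\max_(ji : 'I_n.+1 * 'I_n.+1) f ji) => m Hm j i.
apply: (Hf (j, i)); apply: leq_trans Hm; exact: (@leq_bigmax _ f (j, i)).
Qed.

(* A vector fixed by M^k (k > 0) is fixed by every M^(k q), so it is 0. *)
Lemma one_sub_power_unit (k : nat) : (0 < k)%N -> (1%:M - M ^+ k) \in unitmx.
Proof.
move=> k0; rewrite unitmxE unitfE; apply/negP => /det0P [v v0 Hv].
have Hv' : v = v *m M ^+ k.
  by move/eqP: Hv; rewrite mulmxBr mulmx1 subr_eq0 => /eqP.
have Hvq q : v = v *m M ^+ (k * q).
  elim: q => [|q IH]; first by rewrite muln0 expr0 mulmx1.
  by rewrite mulnS exprD -mulmxE mulmxA -Hv'.
move/negP: v0; apply; apply/eqP/rowP => j; rewrite mxE.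
apply/eqP/negP => /negP vj0.
have vpos : 0 < `|v 0 j| by rewrite normr_gt0.
have [N0 HN0] := orbit_vanishes v j _ vpos.
by have := HN0 (k * N0)%N (leq_pmull _ k0); rewrite -Hvq ltxx.
Qed.
End InverseOfExpansive.

(* Transfer between vectors [Fin.t d -> R] and MathComp row vectors; a matrix
   [A : Mat d] acting by [mv] becomes right multiplication by its transpose. *)
Definition of_ord {d} (i : 'I_d) : Fin.t d := Fin.of_nat_lt (elimT ssrnat.ltP (ltn_ord i)).
Definition to_ord {d} (f : Fin.t d) : 'I_d :=
  Ordinal (introT ssrnat.ltP (proj2_sig (Fin.to_nat f))).

Lemma of_ord_val d (i : 'I_d) : proj1_sig (Fin.to_nat (of_ord i)) = i.
Proof. by rewrite /of_ord Fin.to_nat_of_nat. Qed.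

Lemma of_to_ord d (f : Fin.t d) : of_ord (to_ord f) = f.
Proof. by apply: Fin.to_nat_inj; rewrite of_ord_val. Qed.

Lemma to_of_ord d (i : 'I_d) : to_ord (of_ord i) = i.
Proof. by apply: val_inj; rewrite /= of_ord_val. Qed.

Lemma fin_sum_big d (f : Fin.t d -> RR) : fin_sum d f = \sum_(i < d) f (of_ord i).
Proof.
elim: d f => [|d IH] f; first by rewrite big_ord0.
rewrite big_ord_recl /= IH.
have -> : of_ord (@ord0 d) = Fin.F1 by apply: Fin.to_nat_inj; rewrite of_ord_val.
have E (i : 'I_d) : of_ord (lift ord0 i) = Fin.FS (of_ord i).
  apply: Fin.to_nat_inj; rewrite of_ord_val.
  by have := Fin.R_sanity 1 (of_ord i); rewrite of_ord_val => ->.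
by under [in RHS]eq_bigr => i _ do rewrite E.
Qed.

Definition mx_of {d} (A : Mat d) : 'M[RR]_d := \matrix_(i, j) A (of_ord j) (of_ord i).
Definition row_of {d} (x : Vec d) : 'rV[RR]_d := \row_j x (of_ord j).
Definition vec_of {d} (v : 'rV[RR]_d) : Vec d := fun f => v 0 (to_ord f).

Lemma row_of_mv d (A : Mat d) x : row_of (mv A x) = row_of x *m mx_of A.
Proof.
apply/rowP => j; rewrite !mxE /mv fin_sum_big.
by apply: eq_bigr => i _; rewrite !mxE mulrC.
Qed.

Lemma row_of_vec_of d (v : 'rV[RR]_d) : row_of (vec_of v) = v.
Proof. by apply/rowP => j; rewrite !mxE /vec_of to_of_ord. Qed.

Lemma vec_of_row_of d (x : Vec d) : vec_of (row_of x) = x.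
Proof.
by apply: FunctionalExtensionality.functional_extensionality => f; rewrite /vec_of mxE of_to_ord.
Qed.

Lemma row_of_inj d (x y : Vec d) : row_of x = row_of y -> x = y.
Proof. by move=> H; rewrite -(vec_of_row_of _ x) H vec_of_row_of. Qed.

Lemma row_of_iter d (A : Mat d) m x : row_of (Nat.iter m (mv A) x) = row_of x *m mx_of A ^+ m.
Proof.
elim: m => [|m IH]; first by rewrite expr0 mulmx1.
by rewrite /= row_of_mv IH exprSr -mulmxE mulmxA.
Qed.

Lemma matrix_hypotheses n (Rm Rinv : Mat n.+1) :
  expansive Rm -> (forall x, mv Rm (mv Rinv x) = x) ->
  mx_of Rinv *m mx_of Rm = 1%:M /\
  (forall (a b : RR) (u w : 'rV[RR]_n.+1), (u != 0) \/ (w != 0) ->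
   u *m mx_of Rm = a *: u - b *: w -> w *m mx_of Rm = b *: u + a *: w -> 1 < a ^+ 2 + b ^+ 2).
Proof.
move=> Hexp Hinv; split.
  apply/row_matrixP => i; rewrite !rowE mulmxA mulmx1.
  by rewrite -(row_of_vec_of _ (delta_mx 0 i)) -!row_of_mv Hinv.
move=> a b u w uw Eu Ew.
have nz (v : 'rV[RR]_n.+1) : v != 0 -> exists j, v 0 j != 0.
  move=> v0; have : ~~ [forall j, v 0 j == 0].
    by apply: contra v0 => /forallP H; apply/eqP/rowP => j; rewrite mxE; exact/eqP.
  by move/forallPn.
have h1 : exists i, vec_of u i <> 0 \/ vec_of w i <> 0.
  case: uw => [/nz [j uj]|/nz [j wj]]; exists (of_ord j); [left|right];
  rewrite /vec_of to_of_ord; exact/eqP.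
have h2 : mv Rm (vec_of u) = (fun i => Rminus (Rmult a (vec_of u i)) (Rmult b (vec_of w i))).
  by apply: row_of_inj; rewrite row_of_mv row_of_vec_of Eu; apply/rowP => j;
  rewrite !mxE /vec_of !to_of_ord.
have h3 : mv Rm (vec_of w) = (fun i => Rplus (Rmult b (vec_of u i)) (Rmult a (vec_of w i))).
  by apply: row_of_inj; rewrite row_of_mv row_of_vec_of Ew; apply/rowP => j;
  rewrite !mxE /vec_of !to_of_ord.
by move/RltP: (Hexp a b (vec_of u) (vec_of w) h1 h2 h3); rewrite !expr2.
Qed.

Lemma iterate_coordinates_small d (Rm Rinv : Mat d) :
  expansive Rm -> (forall x, mv Rm (mv Rinv x) = x) ->
  forall e : RR, Rlt 0 e -> exists N0, forall m, (N0 <= m)%coq_nat ->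
  forall (z : Vec d) i,
    Rle (Rabs (Nat.iter m (mv Rinv) z i)) (Rmult e (fin_sum d (fun j => Rabs (z j)))).
Proof.
case: d Rm Rinv => [|n] Rm Rinv Hexp Hinv e.
  by move=> _; exists 0%N => m _ z i; exfalso; exact: (Fin.case0 (fun _ => False) i).
move=> /RltP e0.
have [MN Hexp'] := matrix_hypotheses _ _ _ Hexp Hinv.
have [N0 HN0] := power_entries_vanish _ _ _ MN Hexp' _ e0.
exists N0 => m /ssrnat.leP Hm z i; apply/RleP.
have -> : Nat.iter m (mv Rinv) z i = (row_of z *m mx_of Rinv ^+ m) 0 (to_ord i).
  by rewrite -row_of_iter mxE of_to_ord.
rewrite RmultE fin_sum_big mulr_sumr [in X in X <= _]RabsE mxE.
apply: le_trans (ler_norm_sum _ _ _) _; apply: ler_sum => j _.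
rewrite mxE normrM RabsE mulrC; apply: ler_wpM2r; first exact: normr_ge0.
exact: ltW (HN0 m Hm _ _).
Qed.

(* For k > 0 the affine map y |-> R^{-k} y + c has a fixed point, since
   1 - R^{-k} is invertible. *)
Lemma affine_fixed_point d (Rm Rinv : Mat d) :
  expansive Rm -> (forall x, mv Rm (mv Rinv x) = x) ->
  forall (k : nat) (c : Vec d), (0 < k)%coq_nat ->
  exists y, vadd (Nat.iter k (mv Rinv) y) c = y.
Proof.
case: d Rm Rinv => [|n] Rm Rinv Hexp Hinv k c k0.
  exists c; apply: FunctionalExtensionality.functional_extensionality => i.
  exfalso; exact: (Fin.case0 (fun _ => False) i).
have [MN Hexp'] := matrix_hypotheses _ _ _ Hexp Hinv.
have U := one_sub_power_unit _ _ _ MN Hexp' _ (introT ssrnat.ltP k0).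
set y := row_of c *m invmx (1%:M - mx_of Rinv ^+ k).
exists (vec_of y); apply: row_of_inj.
have -> : row_of (vadd (Nat.iter k (mv Rinv) (vec_of y)) c)
    = row_of (Nat.iter k (mv Rinv) (vec_of y)) + row_of c.
  by apply/rowP => j; rewrite !mxE.
rewrite row_of_iter row_of_vec_of.
have Hy : y *m (1%:M - mx_of Rinv ^+ k) = row_of c by rewrite /y -mulmxA mulVmx // mulmx1.
by rewrite -Hy mulmxBr mulmx1 addrC subrK.
Qed.
End Spectral.

Lemma fin_sum_ext d (f g : Fin.t d -> R) : (forall i, f i = g i) -> fin_sum d f = fin_sum d g.
Proof.
  induction d; intros H; simpl; auto.
  rewrite H, (IHd (fun i => f (Fin.FS i)) (fun i => g (Fin.FS i))); auto.
Qed.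

Lemma fin_sum_add d (f g : Fin.t d -> R) :
  fin_sum d (fun i => f i + g i) = fin_sum d f + fin_sum d g.
Proof.
  induction d; simpl. lra.
  rewrite (IHd (fun i => f (Fin.FS i)) (fun i => g (Fin.FS i))). lra.
Qed.

Lemma fin_sum_scal d (c : R) (f : Fin.t d -> R) : fin_sum d (fun i => c * f i) = c * fin_sum d f.
Proof. induction d; simpl. lra. rewrite (IHd (fun i => f (Fin.FS i))). lra. Qed.

Lemma fin_sum_opp d (f : Fin.t d -> R) : fin_sum d (fun i => - f i) = - fin_sum d f.
Proof. induction d; simpl. lra. rewrite (IHd (fun i => f (Fin.FS i))). lra. Qed.

Lemma fin_sum_le d (f g : Fin.t d -> R) : (forall i, f i <= g i) -> fin_sum d f <= fin_sum d g.
Proof.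
  induction d; intros H; simpl. lra.
  pose proof (IHd (fun i => f (Fin.FS i)) (fun i => g (Fin.FS i)) (fun i => H _)).
  pose proof (H Fin.F1). lra.
Qed.

Lemma fin_sum_const d (c : R) : fin_sum d (fun _ => c) = INR d * c.
Proof. induction d; simpl. lra. rewrite IHd. destruct d; simpl; lra. Qed.

Lemma fin_sum_nonneg d (f : Fin.t d -> R) : (forall i, 0 <= f i) -> 0 <= fin_sum d f.
Proof.
  intros H. replace 0 with (fin_sum d (fun _ => 0)).
  - apply fin_sum_le; intros; apply H.
  - rewrite fin_sum_const. ring.
Qed.

Lemma fin_sum_term_le d (f : Fin.t d -> R) i : (forall i, 0 <= f i) -> f i <= fin_sum d f.
Proof.
  induction d.
  - exfalso; exact (Fin.case0 (fun _ => False) i).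
  - intros H. simpl.
    pose proof (fin_sum_nonneg d (fun i => f (Fin.FS i)) (fun i => H _)).
    revert f H H0. pattern i. apply Fin.caseS'.
    + intros. lra.
    + intros j f H H0. pose proof (IHd (fun i => f (Fin.FS i)) j (fun i => H _)).
      pose proof (H Fin.F1). lra.
Qed.

Lemma fin_sum_abs d (f : Fin.t d -> R) : Rabs (fin_sum d f) <= fin_sum d (fun i => Rabs (f i)).
Proof.
  induction d; simpl.
  - rewrite Rabs_R0. lra.
  - eapply Rle_trans. apply Rabs_triang.
    pose proof (IHd (fun i => f (Fin.FS i))). lra.
Qed.

Lemma fin_sum_squares_le d (w : Fin.t d -> R) :
  fin_sum d (fun i => w i * w i)
  <= fin_sum d (fun i => Rabs (w i)) * fin_sum d (fun i => Rabs (w i)).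
Proof.
  induction d; simpl. lra.
  pose proof (IHd (fun i => w (Fin.FS i))) as H.
  pose proof (fin_sum_nonneg d (fun i => Rabs (w (Fin.FS i))) (fun i => Rabs_pos _)).
  pose proof (Rabs_pos (w Fin.F1)).
  assert (w Fin.F1 * w Fin.F1 = Rabs (w Fin.F1) * Rabs (w Fin.F1)).
  { rewrite <- Rabs_mult. rewrite Rabs_right; [lra|]. apply Rle_ge, Rle_0_sqr. }
  nra.
Qed.

(* The l1 norm, which is equivalent to the Euclidean norm defining the
   topology: vnorm <= norm1 <= d * vnorm.  All estimates use norm1. *)
Definition vsub {d} (x y : Vec d) : Vec d := fun i => x i - y i.
Definition norm1 {d} (x : Vec d) : R := fin_sum d (fun i => Rabs (x i)).

Lemma norm1_nonneg d (x : Vec d) : 0 <= norm1 x.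
Proof. apply fin_sum_nonneg. intros; apply Rabs_pos. Qed.

Lemma coord_le_norm1 d (x : Vec d) i : Rabs (x i) <= norm1 x.
Proof. apply (fin_sum_term_le d (fun i => Rabs (x i))). intros; apply Rabs_pos. Qed.

Lemma norm1_triang d (x y z : Vec d) : norm1 (vsub x z) <= norm1 (vsub x y) + norm1 (vsub y z).
Proof.
  unfold norm1, vsub. rewrite <- fin_sum_add. apply fin_sum_le. intros i.
  replace (x i - z i) with ((x i - y i) + (y i - z i)) by ring. apply Rabs_triang.
Qed.

Lemma norm1_sym d (x y : Vec d) : norm1 (vsub x y) = norm1 (vsub y x).
Proof. unfold norm1, vsub. apply fin_sum_ext. intros; apply Rabs_minus_sym. Qed.

Lemma norm1_eq0 d (x y : Vec d) : norm1 (vsub x y) = 0 -> x = y.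
Proof.
  intros H. apply functional_extensionality. intros i.
  pose proof (coord_le_norm1 d (vsub x y) i). pose proof (Rabs_pos (vsub x y i)).
  unfold vsub in *. apply Rminus_diag_uniq.
  destruct (Req_dec (x i - y i) 0) as [E|E]; auto.
  apply Rabs_no_R0 in E. lra.
Qed.

Lemma vdist_nonneg d (x y : Vec d) : 0 <= vdist x y.
Proof. unfold vdist, vnorm. apply sqrt_pos. Qed.

Lemma vdist_le_norm1 d (x y : Vec d) : vdist x y <= norm1 (vsub x y).
Proof.
  unfold vdist, vnorm. rewrite <- (sqrt_square (norm1 (vsub x y))) by apply norm1_nonneg.
  apply sqrt_le_1_alt. apply fin_sum_squares_le.
Qed.

Lemma norm1_le_vdist d (x y : Vec d) : norm1 (vsub x y) <= INR d * vdist x y.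
Proof.
  unfold norm1. rewrite <- fin_sum_const. apply fin_sum_le. intros i.
  unfold vdist, vnorm. rewrite <- sqrt_Rsqr_abs. apply sqrt_le_1_alt.
  apply (fin_sum_term_le d (fun i => vsub x y i * vsub x y i)). intros; apply Rle_0_sqr.
Qed.

Lemma open_of_norm1 d (U : set d) :
  (forall x, U x -> exists r, 0 < r /\ forall y, norm1 (vsub y x) < r -> U y) -> is_open U.
Proof.
  intros H x Hx. destruct (H x Hx) as [r [Hr HU]].
  pose proof (pos_INR d).
  exists (r / (INR d + 1)). split. { apply Rdiv_lt_0_compat; lra. }
  intros y Hy. apply HU. rewrite norm1_sym.
  pose proof (norm1_le_vdist d x y). pose proof (vdist_nonneg d x y).
  assert (vdist x y * (INR d + 1) < r).
  { apply Rmult_lt_reg_r with (/ (INR d + 1)). apply Rinv_0_lt_compat; lra.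
    rewrite Rmult_assoc, Rinv_r by lra. rewrite Rmult_1_r. exact Hy. }
  nra.
Qed.

Definition ball1 {d} (c : Vec d) (r : R) : set d := fun y => norm1 (vsub y c) < r.

Lemma open_ball1 d (c : Vec d) r : is_open (ball1 c r).
Proof.
  apply open_of_norm1. intros y Hy. exists (r - norm1 (vsub y c)). split.
  { unfold ball1 in Hy. lra. }
  intros z Hz. unfold ball1. pose proof (norm1_triang d z y c). lra.
Qed.

Lemma open_far d (x : Vec d) (r : R) : is_open (fun y => r < norm1 (vsub y x)).
Proof.
  apply open_of_norm1. intros y Hy. exists (norm1 (vsub y x) - r). split. lra.
  intros z Hz. pose proof (norm1_triang d y z x). rewrite (norm1_sym d y z) in H. lra.
Qed.

Definition nbhd {d} (S : set d) (delta : R) : set d :=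
  fun x => exists y, S y /\ norm1 (vsub x y) < delta.

Lemma open_nbhd d (S : set d) delta : is_open (nbhd S delta).
Proof.
  apply open_of_norm1. intros x [y [Hy Hxy]]. exists (delta - norm1 (vsub x y)). split. lra.
  intros z Hz. exists y. split; auto. pose proof (norm1_triang d z x y). lra.
Qed.

Definition mat_norm1 {d} (A : Mat d) : R := fin_sum d (fun i => fin_sum d (fun j => Rabs (A i j))).

Lemma mat_norm1_nonneg d (A : Mat d) : 0 <= mat_norm1 A.
Proof. apply fin_sum_nonneg; intros; apply fin_sum_nonneg; intros; apply Rabs_pos. Qed.

Lemma mv_norm1_le d (A : Mat d) (z : Vec d) : norm1 (mv A z) <= mat_norm1 A * norm1 z.
Proof.
  unfold norm1 at 1, mat_norm1. rewrite Rmult_comm, <- (fin_sum_scal d (norm1 z)).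
  apply fin_sum_le. intros i. unfold mv. eapply Rle_trans. apply fin_sum_abs.
  rewrite <- fin_sum_scal. apply fin_sum_le. intros j.
  rewrite Rabs_mult, (Rmult_comm (norm1 z)). apply Rmult_le_compat_l.
  apply Rabs_pos. apply coord_le_norm1.
Qed.

Lemma mv_sub d (A : Mat d) (x y : Vec d) : vsub (mv A x) (mv A y) = mv A (vsub x y).
Proof.
  apply functional_extensionality. intros i. unfold vsub, mv.
  unfold Rminus. rewrite <- fin_sum_opp, <- fin_sum_add. apply fin_sum_ext. intros; ring.
Qed.

Lemma iterate_norm1_le d (A : Mat d) n z :
  norm1 (Nat.iter n (mv A) z) <= mat_norm1 A ^ n * norm1 z.
Proof.
  induction n; simpl. lra.
  eapply Rle_trans. apply mv_norm1_le. rewrite Rmult_assoc.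
  apply Rmult_le_compat_l. apply mat_norm1_nonneg. exact IHn.
Qed.

Definition lipschitz {d} (f : Vec d -> Vec d) : Prop :=
  exists K, 0 <= K /\ forall x y, norm1 (vsub (f x) (f y)) <= K * norm1 (vsub x y).

Definition is_continuous {d} (f : Vec d -> Vec d) : Prop :=
  forall U, is_open U -> is_open (preimage f U).

Lemma lipschitz_continuous d (f : Vec d -> Vec d) : lipschitz f -> is_continuous f.
Proof.
  intros [K [HK Hf]] U HU. apply open_of_norm1. intros x Hx.
  destruct (HU (f x) Hx) as [eps [Heps HU']].
  exists (eps / (K + 1)). split. { apply Rdiv_lt_0_compat; lra. }
  intros y Hy. apply HU'. unfold preimage.
  apply Rle_lt_trans with (norm1 (vsub (f x) (f y))). apply vdist_le_norm1.
  rewrite norm1_sym. eapply Rle_lt_trans. apply Hf.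
  pose proof (norm1_nonneg d (vsub y x)).
  assert (norm1 (vsub y x) * (K + 1) < eps).
  { apply Rmult_lt_reg_r with (/ (K + 1)). apply Rinv_0_lt_compat; lra.
    rewrite Rmult_assoc, Rinv_r by lra. rewrite Rmult_1_r. exact Hy. }
  nra.
Qed.

Lemma compact_image d (f : Vec d -> Vec d) (K : set d) :
  is_continuous f -> is_compact K -> is_compact (image f K).
Proof.
  intros Hf HK I U HU Hcov.
  destruct (HK I (fun i => preimage f (U i)) (fun i => Hf _ (HU i))) as [l Hl].
  - intros x Kx. destruct (Hcov (f x) (ex_intro _ x (conj Kx eq_refl))) as [i Hi].
    exists i; exact Hi.
  - exists l. intros x [y [Ky Hxy]]. subst x. destruct (Hl y Ky) as [i [Hin Hi]].
    exists i; split; auto.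
Qed.

Lemma list_max_bound (l : list nat) m : In m l -> (m <= list_max l)%nat.
Proof.
  intros Hm. pose proof (proj1 (list_max_le l (list_max l)) (Nat.le_refl _)) as HF.
  rewrite Forall_forall in HF. auto.
Qed.

Lemma compact_sep d (K : set d) (x : Vec d) :
  is_compact K -> ~ K x -> exists eps, 0 < eps /\ forall y, K y -> eps <= norm1 (vsub y x).
Proof.
  intros HK Hx.
  destruct (HK nat (fun m y => / INR (S m) < norm1 (vsub y x)) (fun m => open_far d x _))
    as [l Hl].
  - intros y Ky.
    assert (Hpos : 0 < norm1 (vsub y x)).
    { destruct (Rle_lt_or_eq_dec 0 _ (norm1_nonneg d (vsub y x))) as [H|H]; auto.
      exfalso. apply Hx. rewrite <- (norm1_eq0 d y x); auto. }
    destruct (archimed_cor1 _ Hpos) as [N0 [HN0 HN0']].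
    exists (Nat.pred N0). replace (S (Nat.pred N0)) with N0 by lia. exact HN0.
  - exists (/ INR (S (list_max l))). split.
    { apply Rinv_0_lt_compat. apply lt_0_INR. lia. }
    intros y Ky. destruct (Hl y Ky) as [m [Hm Hy]].
    pose proof (list_max_bound l m Hm).
    left. eapply Rle_lt_trans; [|exact Hy].
    apply Rinv_le_contravar. apply lt_0_INR; lia. apply le_INR; lia.
Qed.

Lemma compact_bounded d (K : set d) (c : Vec d) :
  is_compact K -> exists B, forall y, K y -> norm1 (vsub y c) <= B.
Proof.
  intros HK.
  destruct (HK nat (fun m => ball1 c (INR m)) (fun m => open_ball1 d c _)) as [l Hl].
  - intros y Ky. destruct (INR_unbounded (norm1 (vsub y c))) as [m Hm]. exists m.
    unfold ball1. lra.
  - exists (INR (list_max l)). intros y Ky. destruct (Hl y Ky) as [m [Hm Hy]].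
    pose proof (le_INR _ _ (list_max_bound l m Hm)). unfold ball1 in Hy. lra.
Qed.

Lemma set_ext d (A B : set d) : (forall x, A x <-> B x) -> A = B.
Proof.
  intros H. apply functional_extensionality. intros x.
  apply propositional_extensionality. apply H.
Qed.

(* Compact sets are closed, hence Borel. *)
Lemma compact_borel d (K : set d) : is_compact K -> borel K.
Proof.
  intros HK. replace K with (fun x => ~ ~ K x).
  2: { apply set_ext. intros x. split; [apply NNPP | auto]. }
  apply borel_compl, borel_open, open_of_norm1. intros x Hx.
  destruct (compact_sep d K x HK Hx) as [eps [Heps H]].
  exists eps. split; auto. intros z Hz Kz. pose proof (H z Kz). lra.
Qed.

Lemma borel_preimage d (f : Vec d -> Vec d) (A : set d) :
  is_continuous f -> borel A -> borel (preimage f A).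
Proof.
  intros Hf HA. induction HA.
  - apply borel_open. now apply Hf.
  - apply (borel_compl (preimage f A)). auto.
  - apply (borel_union (fun n => preimage f (A n))). auto.
Qed.

Lemma borel_empty d : borel (fun _ : Vec d => False).
Proof. apply borel_open. intros x []. Qed.

Lemma borel_union2 d (A B : set d) : borel A -> borel B -> borel (fun x => A x \/ B x).
Proof.
  intros HA HB.
  replace (fun x => A x \/ B x) with (fun x => exists n, (match n with 0 => A | _ => B end) x).
  - apply borel_union. intros [|n]; auto.
  - apply set_ext. intros x. split.
    + intros [[|n] H]; auto.
    + intros [H|H]; [exists 0%nat | exists 1%nat]; auto.
Qed.

Lemma borel_inter2 d (A B : set d) : borel A -> borel B -> borel (fun x => A x /\ B x).
Proof.
  intros HA HB.
  replace (fun x => A x /\ B x) with (fun x => ~ (~ A x \/ ~ B x)).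
  - apply borel_compl. apply borel_union2; apply borel_compl; auto.
  - apply set_ext. intros x. split.
    + intros H. split; apply NNPP; intros H'; apply H; auto.
    + intros [H1 H2] [H|H]; auto.
Qed.

Section ProbabilityMeasure.
Variable d : nat.
Variable mu : set d -> R.
Hypothesis Hmu : is_prob_measure mu.

Lemma mu_nonneg A : borel A -> 0 <= mu A.
Proof. apply (proj1 Hmu). Qed.

Lemma mu_empty : mu (fun _ => False) = 0.
Proof. apply (proj1 (proj2 Hmu)). Qed.

Lemma mu_full : mu (fun _ => True) = 1.
Proof. apply (proj1 (proj2 (proj2 Hmu))). Qed.

(* Finite additivity, from countable additivity with empty tail. *)
Lemma mu_union2 (A B : set d) : borel A -> borel B -> (forall x, A x -> B x -> False) ->
  mu (fun x => A x \/ B x) = mu A + mu B.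
Proof.
  intros HA HB Hdis.
  set (Sq := fun n => match n with 0 => A | 1 => B | _ => (fun _ : Vec d => False) end).
  assert (HS : forall n, borel (Sq n)).
  { intros [|[|n]]; simpl; auto. apply borel_empty. }
  assert (Hdj : forall m n x, m <> n -> Sq m x -> Sq n x -> False).
  { intros [|[|m]] [|[|n]] x Hmn; simpl; try tauto; try lia;
      intros; eapply Hdis; eauto. }
  pose proof (proj2 (proj2 (proj2 Hmu)) Sq HS Hdj) as Hsum.
  replace (fun x => exists n, Sq n x) with (fun x => A x \/ B x) in Hsum.
  2: { apply set_ext. intros x. split.
       - intros [H|H]; [exists 0%nat | exists 1%nat]; auto.
       - intros [[|[|n]] H]; simpl in H; tauto. }
  apply (uniqueness_sum (fun n => mu (Sq n))); auto.
  intros eps Heps. exists 1%nat. intros n Hn.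
  assert (E : forall m, sum_f_R0 (fun n => mu (Sq n)) (S m) = mu A + mu B).
  { induction m. simpl. lra. simpl. simpl in IHm. rewrite IHm, mu_empty. lra. }
  destruct n. lia. rewrite E. unfold R_dist. rewrite Rminus_diag, Rabs_R0. lra.
Qed.

Lemma mu_mono (A B : set d) : borel A -> borel B -> (forall x, A x -> B x) -> mu A <= mu B.
Proof.
  intros HA HB Hsub.
  assert (E : B = (fun x => A x \/ (B x /\ ~ A x))).
  { apply set_ext. intros x. split.
    - intros Hx. destruct (classic (A x)); auto.
    - intros [H|[H _]]; auto. }
  assert (HBA : borel (fun x => B x /\ ~ A x)) by (apply borel_inter2, borel_compl; auto).
  rewrite E, mu_union2; auto.
  - pose proof (mu_nonneg _ HBA). lra.
  - intros x H1 [_ H2]; auto.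
Qed.

Lemma mu_compl (A : set d) : borel A -> mu (fun x => ~ A x) = 1 - mu A.
Proof.
  intros HA.
  assert (E : (fun _ : Vec d => True) = (fun x => A x \/ ~ A x)).
  { apply set_ext. intros x. split; auto. intros _. apply classic. }
  pose proof mu_full as H. rewrite E, mu_union2 in H; auto.
  - lra.
  - apply borel_compl; auto.
Qed.

Lemma mu_null_subset (A B : set d) :
  borel A -> borel B -> (forall x, A x -> B x) -> mu B = 0 -> mu A = 0.
Proof. intros HA HB Hs H0. pose proof (mu_mono A B HA HB Hs). pose proof (mu_nonneg A HA). lra. Qed.

(* Tightness: the complement of a large enough ball has small measure, since the
   balls of integer radius exhaust R^d (countable additivity over the shells). *)
Lemma mu_outside_ball_small (c : Vec d) eta : 0 < eta ->
  exists r, mu (fun x => ~ ball1 c r x) < eta.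
Proof.
  intros Heta.
  set (shell := fun m x => ball1 c (INR (S m)) x /\ ~ ball1 c (INR m) x).
  assert (Hball : forall r, borel (ball1 c r)) by (intros; apply borel_open, open_ball1).
  assert (Hshell : forall m, borel (shell m)).
  { intros m. apply borel_inter2; auto. apply borel_compl; auto. }
  assert (Hdj : forall m n x, m <> n -> shell m x -> shell n x -> False).
  { intros m n x Hmn [H1 H2] [H3 H4]. unfold ball1 in *.
    destruct (Nat.lt_gt_cases m n) as [[H|H] _]; auto.
    - apply H4. apply Rlt_le_trans with (INR (S m)); auto. apply le_INR; lia.
    - apply H2. apply Rlt_le_trans with (INR (S n)); auto. apply le_INR; lia. }
  pose proof (proj2 (proj2 (proj2 Hmu)) shell Hshell Hdj) as Hs.
  replace (fun x => exists n, shell n x) with (fun _ : Vec d => True) in Hs.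
  2:{ apply set_ext. intros x. split; auto. intros _.
      destruct (INR_unbounded (norm1 (vsub x c))) as [M HM].
      induction M.
      - simpl in HM. pose proof (norm1_nonneg d (vsub x c)). lra.
      - destruct (Rlt_dec (norm1 (vsub x c)) (INR M)) as [H|H]; auto.
        exists M. split; auto. }
  rewrite mu_full in Hs.
  assert (Hsum : forall m, mu (ball1 c (INR m)) = sum_f_R0 (fun n => mu (shell n)) m - mu (shell m)).
  { induction m.
    - replace (ball1 c (INR 0)) with (fun _ : Vec d => False).
      + rewrite mu_empty. simpl. ring.
      + apply set_ext. intros x. unfold ball1. simpl.
        pose proof (norm1_nonneg d (vsub x c)). split; [tauto|lra].
    - simpl sum_f_R0. replace (ball1 c (INR (S m))) with (fun x => ball1 c (INR m) x \/ shell m x).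
      + rewrite mu_union2; auto. lra. intros x H [_ H']. auto.
      + apply set_ext. intros x. unfold shell, ball1. split.
        * intros [H|[H _]]; auto. apply Rlt_le_trans with (INR m); auto. apply le_INR; lia.
        * intros H. destruct (Rlt_dec (norm1 (vsub x c)) (INR m)); auto. }
  destruct (Hs eta Heta) as [N0 HN0].
  exists (INR (S N0)). rewrite mu_compl by auto.
  pose proof (Hsum (S N0)) as E. simpl sum_f_R0 in E.
  pose proof (HN0 N0 (Nat.le_refl _)). unfold R_dist in H.
  apply Rabs_def2 in H. lra.
Qed.
End ProbabilityMeasure.

Definition lsum {A : Type} (l : list A) (f : A -> R) : R := fold_right Rplus 0 (map f l).

Lemma lsum_app {A} (l1 l2 : list A) f : lsum (l1 ++ l2) f = lsum l1 f + lsum l2 f.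
Proof. induction l1; unfold lsum in *; simpl; [lra|]. rewrite IHl1. lra. Qed.

Lemma lsum_flat_map {A B} (l : list A) (g : A -> list B) f :
  lsum (flat_map g l) f = lsum l (fun a => lsum (g a) f).
Proof. induction l; simpl. reflexivity. rewrite lsum_app, IHl. reflexivity. Qed.

Lemma lsum_map {A B} (l : list A) (h : A -> B) f : lsum (map h l) f = lsum l (fun a => f (h a)).
Proof. unfold lsum. rewrite map_map. reflexivity. Qed.

Lemma lsum_scal {A} (l : list A) c f : c * lsum l f = lsum l (fun a => c * f a).
Proof. induction l; unfold lsum in *; simpl. lra. rewrite <- IHl. lra. Qed.

Lemma lsum_ext_in {A} (l : list A) f g : (forall a, In a l -> f a = g a) -> lsum l f = lsum l g.
Proof.
  induction l; intros H; unfold lsum in *; simpl; auto.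
  rewrite H by (left; auto). rewrite IHl; auto. intros; apply H; right; auto.
Qed.

Lemma lsum_le_in {A} (l : list A) f g : (forall a, In a l -> f a <= g a) -> lsum l f <= lsum l g.
Proof.
  induction l; intros H; unfold lsum in *; simpl. lra.
  pose proof (H a (or_introl eq_refl)). pose proof (IHl (fun x Hx => H x (or_intror Hx))). lra.
Qed.

Lemma lsum_pos {A} (l : list A) f a0 :
  (forall a, In a l -> 0 <= f a) -> In a0 l -> 0 < f a0 -> 0 < lsum l f.
Proof.
  induction l; intros H Hin Hpos; simpl in Hin. contradiction.
  assert (0 <= lsum l f).
  { replace 0 with (lsum l (fun _ => 0)).
    - apply lsum_le_in. intros; apply H; right; auto.
    - clear. induction l; unfold lsum in *; simpl; auto. rewrite IHl. lra. }
  unfold lsum in *; simpl. destruct Hin as [->|Hin].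
  - lra.
  - pose proof (H a (or_introl eq_refl)). pose proof (IHl (fun x Hx => H x (or_intror Hx)) Hin Hpos).
    lra.
Qed.

Lemma sum_lt_seq N f : sum_lt N f = lsum (seq 0 N) f.
Proof.
  induction N. reflexivity.
  simpl sum_lt. rewrite IHN, seq_S, lsum_app. unfold lsum; simpl. ring.
Qed.

Lemma lsum_words_S N n f :
  lsum (words N (S n)) f = lsum (seq 0 N) (fun i => lsum (words N n) (fun J => f (i :: J))).
Proof. simpl. rewrite lsum_flat_map. apply lsum_ext_in. intros. apply lsum_map. Qed.

Lemma words_spec N n I : In I (words N n) <-> length I = n /\ Forall (fun i => (i < N)%nat) I.
Proof.
  revert I. induction n; intros I; simpl.
  - split.
    + intros [<-|[]]. split; auto.
    + intros [H _]. destruct I; simpl in H; try lia. auto.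
  - rewrite in_flat_map. split.
    + intros [i [Hi HI]]. apply in_map_iff in HI. destruct HI as [J [<- HJ]].
      apply IHn in HJ. destruct HJ as [HJ1 HJ2]. apply in_seq in Hi.
      simpl. split. lia. constructor; auto. lia.
    + intros [HL HF]. destruct I as [|i J]; simpl in HL. lia.
      inversion HF; subst. exists i. split. apply in_seq. lia.
      apply in_map. apply IHn. split; auto.
Qed.

Lemma common_threshold {A} (P : A -> R -> Prop) (l : list A) :
  (forall a e e', 0 < e' <= e -> P a e -> P a e') ->
  (forall a, In a l -> exists e, 0 < e /\ P a e) -> exists e, 0 < e /\ forall a, In a l -> P a e.
Proof.
  intros Hmono. induction l as [|a l IH]; intros H.
  - exists 1. split. lra. intros _ [].
  - destruct (H a (or_introl eq_refl)) as [e1 [He1 HP1]].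
    destruct (IH (fun J HJ => H J (or_intror HJ))) as [e2 [He2 HP2]].
    exists (Rmin e1 e2). split. apply Rmin_Rgt_r; auto.
    intros b [<-|Hb].
    + apply (Hmono a e1); auto. split. apply Rmin_Rgt_r; auto. apply Rmin_l.
    + apply (Hmono b e2); auto. split. apply Rmin_Rgt_r; auto. apply Rmin_r.
Qed.

Lemma eventually_geometric (a : nat -> R) (P : R) (n0 : nat) :
  P <> 0 -> (forall m, (n0 <= m)%nat -> a (S m) = P * a m) ->
  exists C, forall n, (n0 <= n)%nat -> a n = C * P ^ n.
Proof.
  intros HP Hrec. exists (a n0 / P ^ n0). intros n Hn.
  replace n with (n0 + (n - n0))%nat by lia. generalize (n - n0)%nat. intros j.
  assert (Hj : a (n0 + j)%nat = a n0 * P ^ j).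
  { induction j. rewrite Nat.add_0_r. simpl. ring.
    replace (n0 + S j)%nat with (S (n0 + j)) by lia. rewrite Hrec by lia. rewrite IHj. simpl. ring. }
  rewrite Hj, pow_add. field. apply pow_nonzero. exact HP.
Qed.

Section IFS.
Variables (d : nat) (Rm Rinv : Mat d) (N : nat) (b : nat -> Vec d) (p : nat -> R)
  (X : set d) (mu : set d -> R).
Hypothesis Hexp : expansive Rm.
Hypothesis Hinv : forall x, mv Rm (mv Rinv x) = x.
Hypothesis Hp : forall i, (i < N)%nat -> 0 < p i.
Hypothesis Hsum : sum_lt N p = 1.
Hypothesis Hatt : is_attractor Rinv N b X.
Hypothesis Hmu : is_prob_measure mu.
Hypothesis Hinvar : is_invariant Rinv N b p mu.

Local Notation L := (mv Rinv).
Local Notation tw := (tau_word Rinv b).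

Lemma tau_sub i x y : vsub (tau Rinv b i x) (tau Rinv b i y) = L (vsub x y).
Proof.
  unfold tau. rewrite mv_sub. f_equal. apply functional_extensionality. intros j.
  unfold vsub, vadd. ring.
Qed.

Lemma tau_word_sub I x y : vsub (tw I x) (tw I y) = Nat.iter (length I) L (vsub x y).
Proof. induction I as [|i J IH]; simpl. reflexivity. rewrite tau_sub, IH. reflexivity. Qed.

Lemma continuous_of_linear_part n (f : Vec d -> Vec d) :
  (forall x y, vsub (f x) (f y) = Nat.iter n L (vsub x y)) -> is_continuous f.
Proof.
  intros H. apply lipschitz_continuous. exists (mat_norm1 Rinv ^ n). split.
  - apply pow_le, mat_norm1_nonneg.
  - intros x y. rewrite H. apply iterate_norm1_le.
Qed.

Lemma tau_word_continuous I : is_continuous (tw I).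
Proof. apply (continuous_of_linear_part (length I)). apply tau_word_sub. Qed.

(* tau_I is injective since R^{-1} is. *)
Lemma tau_word_inj I x y : tw I x = tw I y -> x = y.
Proof.
  induction I as [|i J IH]; simpl; auto. intros H. apply IH.
  unfold tau in H. apply (f_equal (mv Rm)) in H. rewrite !Hinv in H.
  apply functional_extensionality. intros j. apply (f_equal (fun v => v j)) in H.
  unfold vadd in H. lra.
Qed.

Lemma tau_word_maps_X I x : Forall (fun i => (i < N)%nat) I -> X x -> X (tw I x).
Proof.
  intros HF Hx. induction HF; simpl; auto.
  destruct Hatt as [_ [_ HX]]. apply HX. exists x0. split; auto. exists (tw l x). auto.
Qed.

Lemma p_word_pos I : Forall (fun i => (i < N)%nat) I -> 0 < p_word p I.
Proof. intros HF. induction HF; simpl. lra. apply Rmult_lt_0_compat; auto. Qed.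

Lemma total_weight n : lsum (words N n) (p_word p) = 1.
Proof.
  induction n.
  - unfold lsum; simpl. lra.
  - rewrite lsum_words_S, <- Hsum, sum_lt_seq. apply lsum_ext_in. intros i _.
    simpl. rewrite <- lsum_scal, IHn. ring.
Qed.

Lemma invariance_words n : forall A, borel A ->
  mu A = lsum (words N n) (fun I => p_word p I * mu (preimage (tw I) A)).
Proof.
  induction n; intros A HA.
  - unfold lsum; simpl. replace (preimage (fun x => x) A) with A by reflexivity. ring.
  - rewrite lsum_words_S, (Hinvar A HA), sum_lt_seq. apply lsum_ext_in. intros i _.
    rewrite (IHn (preimage (tau Rinv b i) A)).
    + rewrite lsum_scal. apply lsum_ext_in. intros J _. simpl. unfold preimage. ring.
    + apply borel_preimage; auto. apply (continuous_of_linear_part 1). apply tau_sub.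
Qed.

Lemma uniform_decay (eps B : R) : 0 < eps -> exists n0, forall n, (n0 <= n)%nat ->
  forall z, norm1 z <= B -> norm1 (Nat.iter n L z) < eps.
Proof.
  intros Heps. pose proof (pos_INR d). pose proof (Rabs_pos B). pose proof (Rle_abs B).
  set (e := eps / (INR d + 1) / (Rabs B + 1)).
  assert (He : 0 < e) by (unfold e; apply Rdiv_lt_0_compat; [apply Rdiv_lt_0_compat|]; lra).
  assert (Ee : e * (Rabs B + 1) * (INR d + 1) = eps) by (unfold e; field; lra).
  destruct (Spectral.iterate_coordinates_small d Rm Rinv Hexp Hinv e He) as [n0 Hn0].
  exists n0. intros n Hn z Hz. pose proof (norm1_nonneg d z).
  assert (Hsum_coords : norm1 (Nat.iter n L z) <= INR d * (e * norm1 z)).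
  { unfold norm1 at 1. rewrite <- fin_sum_const. apply fin_sum_le. intros i. apply Hn0. exact Hn. }
  assert (e * norm1 z <= e * (Rabs B + 1)) by (apply Rmult_le_compat_l; lra).
  nra.
Qed.

(* mu is carried by every delta-neighbourhood of the attractor: iterating the
   invariance, the mass of a large ball is mapped by every tau_I, |I| = n large,
   into the delta-neighbourhood of X. *)
Lemma measure_near_attractor delta : 0 < delta -> mu (fun x => ~ nbhd X delta x) = 0.
Proof.
  intros Hdelta.
  assert (Hfar : borel (fun x => ~ nbhd X delta x)) by apply borel_compl, borel_open, open_nbhd.
  assert (H0 : 0 <= mu (fun x => ~ nbhd X delta x)) by (apply mu_nonneg; auto).
  destruct Hatt as [[y0 Hy0] _].
  assert (Hle : forall eta, 0 < eta -> mu (fun x => ~ nbhd X delta x) <= eta).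
  { intros eta Heta.
    destruct (mu_outside_ball_small d mu Hmu y0 eta Heta) as [r Hr].
    destruct (uniform_decay delta r Hdelta) as [n0 Hn0].
    rewrite (invariance_words n0 _ Hfar).
    apply Rle_trans with (lsum (words N n0) (fun I => p_word p I * mu (fun x => ~ ball1 y0 r x))).
    - apply lsum_le_in. intros I HI. apply words_spec in HI. destruct HI as [HL HF].
      apply Rmult_le_compat_l. left. apply p_word_pos; auto.
      apply mu_mono; auto.
      + apply borel_preimage; auto. apply tau_word_continuous.
      + apply borel_compl, borel_open, open_ball1.
      + intros x Hx Hxr. apply Hx. exists (tw I y0). split. apply tau_word_maps_X; auto.
        rewrite tau_word_sub, HL. apply Hn0. lia. unfold ball1 in Hxr. lra.
    - rewrite (lsum_ext_in _ _ (fun I => mu (fun x => ~ ball1 y0 r x) * p_word p I))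
        by (intros; ring).
      rewrite <- (lsum_scal _ _ (p_word p)), total_weight. lra. }
  destruct (Rle_lt_or_eq_dec 0 _ H0) as [Hpos|Hz]; auto.
  pose proof (Hle (mu (fun x => ~ nbhd X delta x) / 2) ltac:(lra)). lra.
Qed.

Section FixedWord.
Variable I0 : list nat.
Hypothesis HI0 : Forall (fun i => (i < N)%nat) I0.
Hypothesis Hk : (0 < length I0)%nat.
Hypothesis Hfp : fixed_point_condition Rinv N b X (length I0) (tw I0).

Local Notation k := (length I0).
Local Notation t := (tw I0).

Lemma power_sub m x y :
  vsub (Nat.iter m t x) (Nat.iter m t y) = Nat.iter (m * k) L (vsub x y).
Proof.
  revert x y. induction m; intros x y; simpl. reflexivity.
  rewrite tau_word_sub, IHm, <- Nat.iter_add. reflexivity.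
Qed.

Lemma power_image_borel m : borel (image (Nat.iter m t) X).
Proof.
  apply compact_borel, compact_image.
  - apply (continuous_of_linear_part (m * k)). apply power_sub.
  - apply Hatt.
Qed.

(* t(y) = R^{-k} y + t(0), and 1 - R^{-k} is invertible. *)
Lemma tau_has_fixed_point : exists xs, t xs = xs.
Proof.
  set (c := t (fun _ => 0)).
  assert (Haff : forall y, vadd (Nat.iter k L y) c = t y).
  { intros y. apply functional_extensionality. intros i. unfold vadd.
    pose proof (tau_word_sub I0 y (fun _ => 0)) as E. apply (f_equal (fun v => v i)) in E.
    replace (vsub y (fun _ => 0)) with y in E.
    - unfold vsub, c in *. lra.
    - apply functional_extensionality. intros j. unfold vsub. ring. }
  destruct (Spectral.affine_fixed_point d Rm Rinv Hexp Hinv k c Hk) as [xs Hxs].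
  exists xs. rewrite <- Haff. exact Hxs.
Qed.

Section AtFixedPoint.
Variable xs : Vec d.
Hypothesis Hxs : t xs = xs.

Lemma power_fixes m : Nat.iter m t xs = xs.
Proof. induction m; simpl; auto. rewrite IHm; auto. Qed.

Lemma powers_approach_fixed_point eps : 0 < eps -> exists n0, forall m, (n0 <= m)%nat ->
  forall x, X x -> norm1 (vsub (Nat.iter m t x) xs) < eps.
Proof.
  intros Heps.
  destruct (compact_bounded d X xs (proj1 (proj2 Hatt))) as [B HB].
  destruct (uniform_decay eps B Heps) as [n0 Hn0].
  exists n0. intros m Hm x Hx.
  rewrite <- (power_fixes m). rewrite power_sub. apply Hn0; auto. nia.
Qed.

(* By the fixed point condition and compactness, the images tau_I(X) of the
   other maps of A_k stay a positive distance away from the fixed point. *)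
Lemma other_branches_separated : exists eps, 0 < eps /\
  forall I, In I (words N k) -> tw I <> t ->
  forall y, image (tw I) X y -> eps <= norm1 (vsub y xs).
Proof.
  apply (common_threshold
           (fun I e => tw I <> t -> forall y, image (tw I) X y -> e <= norm1 (vsub y xs))).
  { intros I e e' He' HP Hne y Hy. pose proof (HP Hne y Hy). lra. }
  intros I HI. destruct (classic (tw I = t)) as [E|E].
  - exists 1. split. lra. intros H; contradiction.
  - apply words_spec in HI. destruct HI as [HL HFI].
    assert (Hnot : ~ image (tw I) X xs) by (apply (Hfp xs Hxs (tw I)); auto; exists I; auto).
    destruct (compact_sep d (image (tw I) X) xs
                (compact_image d _ _ (tau_word_continuous I) (proj1 (proj2 Hatt))) Hnot)
      as [e [He HP]].
    exists e. split; auto.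
Qed.

(* Hence for large m only t itself maps mass into t^m(X): the preimage of t^m(X)
   under any other tau_I lies outside a fixed neighbourhood of X, so is null. *)
Lemma other_branches_null : exists n0, forall m, (n0 <= m)%nat ->
  forall I, In I (words N k) -> tw I <> t ->
  mu (preimage (tw I) (image (Nat.iter m t) X)) = 0.
Proof.
  destruct other_branches_separated as [eps [Heps Hsep]].
  set (K := mat_norm1 Rinv ^ k).
  assert (HK : 0 <= K) by apply pow_le, mat_norm1_nonneg.
  set (delta := eps / (2 * (K + 1))).
  assert (Hdelta : 0 < delta) by (unfold delta; apply Rdiv_lt_0_compat; lra).
  assert (HKdelta : K * delta <= eps / 2).
  { unfold delta. apply Rle_trans with ((K + 1) * (eps / (2 * (K + 1)))).
    - apply Rmult_le_compat_r; [left; exact Hdelta | lra].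
    - right. field. lra. }
  destruct (powers_approach_fixed_point (eps / 2) ltac:(lra)) as [n0 Hn0].
  exists n0. intros m Hm I HI Hne.
  apply (mu_null_subset d mu Hmu _ (fun x => ~ nbhd X delta x)).
  - apply borel_preimage. apply tau_word_continuous. apply power_image_borel.
  - apply borel_compl, borel_open, open_nbhd.
  - intros x [y' [Hy' Hx]] [y [Hy Hxy]].
    assert (H1 : norm1 (vsub (tw I x) xs) < eps / 2) by (rewrite Hx; apply Hn0; auto).
    assert (H2 : eps <= norm1 (vsub (tw I y) xs)).
    { apply (Hsep I); auto. exists y. auto. }
    assert (H3 : norm1 (vsub (tw I y) (tw I x)) <= K * delta).
    { apply words_spec in HI. destruct HI as [HL _].
      rewrite tau_word_sub, HL. eapply Rle_trans. apply iterate_norm1_le.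
      rewrite norm1_sym. apply Rmult_le_compat_l; lra. }
    pose proof (norm1_triang d (tw I y) (tw I x) xs). lra.
  - apply measure_near_attractor; auto.
Qed.

(* t itself is injective, so its preimage of t^{m+1}(X) is t^m(X). *)
Lemma own_branch_preimage m :
  preimage t (image (Nat.iter (S m) t) X) = image (Nat.iter m t) X.
Proof.
  apply set_ext. intros x. unfold preimage. split.
  - intros [y [Hy Hxy]]. apply tau_word_inj in Hxy. exists y. auto.
  - intros [y [Hy Hxy]]. exists y. split; auto. simpl. rewrite Hxy. reflexivity.
Qed.

(* Invariance under A_k then gives mu(t^{m+1} X) = p_t mu(t^m X) for large m. *)
Lemma measure_recursion : exists n0, forall m, (n0 <= m)%nat ->
  mu (image (Nat.iter (S m) t) X) = p_map Rinv N b p k t * mu (image (Nat.iter m t) X).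
Proof.
  destruct other_branches_null as [n0 Hnull].
  exists n0. intros m Hm.
  rewrite (invariance_words k _ (power_image_borel (S m))).
  unfold p_map. fold (lsum (words N k)
    (fun I => if excluded_middle_informative (tw I = t) then p_word p I else 0)).
  rewrite Rmult_comm, lsum_scal. apply lsum_ext_in. intros I HI.
  destruct (excluded_middle_informative (tw I = t)) as [E|E].
  - rewrite E, own_branch_preimage. ring.
  - rewrite Hnull by (auto; lia). ring.
Qed.
End AtFixedPoint.

(* p_t > 0, since the word I0 itself contributes p_I0 > 0. *)
Lemma p_map_pos : 0 < p_map Rinv N b p k t.
Proof.
  apply (lsum_pos _ _ I0).
  - intros I HI. destruct (excluded_middle_informative (tw I = t)); [|lra].
    apply words_spec in HI. left. apply p_word_pos, HI.
  - apply words_spec. split; auto.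
  - destruct (excluded_middle_informative (tw I0 = t)) as [_|E].
    + apply p_word_pos; auto.
    + exfalso; apply E; reflexivity.
Qed.

Lemma nonempty_word_case : exists (n0 : nat) (C : R), forall n, (n0 <= n)%nat ->
  mu (image (Nat.iter n t) X) = C * p_map Rinv N b p k t ^ n.
Proof.
  destruct tau_has_fixed_point as [xs Hxs].
  destruct (measure_recursion xs Hxs) as [n0 Hrec].
  destruct (eventually_geometric (fun n => mu (image (Nat.iter n t) X)) _ n0
              (Rgt_not_eq _ _ p_map_pos) Hrec) as [C HC].
  exists n0, C. exact HC.
Qed.
End FixedWord.
End IFS.

Lemma empty_word_case d (Rinv : Mat d) N b p (X : set d) (mu : set d -> R) n :
  mu (image (Nat.iter n (tau_word Rinv b nil)) X) = mu X * p_map Rinv N b p 0 (tau_word Rinv b nil) ^ n.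
Proof.
  assert (E : image (Nat.iter n (tau_word Rinv b nil)) X = X).
  { assert (Hid : forall y, Nat.iter n (tau_word Rinv b nil) y = y)
      by (intros y; induction n; simpl; auto).
    apply set_ext. intros x. split.
    - intros [y [Hy ->]]. rewrite Hid. auto.
    - intros Hx. exists x. rewrite Hid. auto. }
  rewrite E. unfold p_map. simpl.
  destruct (excluded_middle_informative _) as [_|E']; [|exfalso; apply E'; reflexivity].
  rewrite Rplus_0_r, pow1. ring.
Qed.

Theorem proposition3p9 (d : nat) (Rm Rinv : Mat d) (N : nat) (b : nat -> Vec d)
  (p : nat -> R) (X : set d) (mu : set d -> R) (k : nat) (t : Vec d -> Vec d) :
  expansive Rm ->
  (forall x, mv Rm (mv Rinv x) = x) ->
  (forall x, mv Rinv (mv Rm x) = x) ->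
  (forall i j, (i < N)%nat -> (j < N)%nat -> b i = b j -> i = j) ->
  (forall i, (i < N)%nat -> 0 < p i) ->
  sum_lt N p = 1 ->
  is_attractor Rinv N b X ->
  is_prob_measure mu ->
  is_invariant Rinv N b p mu ->
  in_A Rinv N b k t ->
  fixed_point_condition Rinv N b X k t ->
  exists (n0 : nat) (C : R), forall n : nat, (n0 <= n)%nat ->
    mu (image (Nat.iter n t) X) = C * (p_map Rinv N b p k t) ^ n.
Proof.
  intros Hexp Hinv _ _ Hp Hsum Hatt Hmu Hinvar [I0 [HL [HF Ht]]] Hfp.
  subst t k.
  destruct I0 as [|i I].
  - exists 0%nat, (mu X). intros n _. apply empty_word_case.
  - apply (nonempty_word_case d Rm Rinv N b p X mu); simpl; auto with arith.
Qed.
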